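(* Let $l$ be an abstract lock object, $t\neq t'$ threads, $x$ a global client variable, $u,v,n$ values, and ${\tt m}\in\{{\tt Acquire},{\tt Release}\}$. For every state that is reachable from an initial state, the following atomic Hoare triples hold (a triple $\{p\}\,S\,\{q\}$ for an atomic step $S$ means: whenever $p$ holds in a (client state, library state) pair and the step $S$ transforms it into a new pair, $q$ holds in the new pair): (1) $\{\mathbf{H}_{l.release_u}\}\ {\tt l.Acquire}(v)_t\ \{v>u+1\}$; (2) $\{\mathbf{H}_{l.release_u}\}\ {\tt l.m}(v)_t\ \{\mathbf{H}_{l.release_u}\}$; (3) $\{[l.release_u]_t\}\ {\tt l.Acquire}(v)_t\ \{[l.acquire_{u+1}]_t\}$; (4) $\{[x=u]_t\}\ {\tt l.m}(v)_{t'}\ \{[x=u]_t\}$; (5) $\{\langle l.release_u\rangle[x=n]_t\}\ {\tt l.Acquire}(v)_t\ \{v=u+1\Rightarrow [x=n]_t\}$; (6) $\{\neg\langle l.release_u\rangle_{t'}\wedge [x=v]_t\}\ {\tt l.Release}(u)_t\ \{\langle l.release_u\rangle[x=v]_{t'}\}$.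
   Context: Memory model (RC11 RAR with views). Timestamps are rationals. A component state $\sigma$ (the client state $\gamma$ or the library state $\beta$) consists of: a set $\sigma.\mathtt{ops}\subseteq Act\times\mathbb{Q}$ of operations with timestamps (writes $wr(x,n)$, releasing writes $wr^{R}(x,n)$, updates $upd^{RA}(x,m,n)$, or abstract object operations such as $l.init_0$, $l.acquire_n(t)$, $l.release_n$); a set $\sigma.\mathtt{cvd}\subseteq\sigma.\mathtt{ops}$ of covered operations; for each thread $t$ a thread view $\sigma.{\tt tview}_t$ mapping each variable/object of that component to an element of $\sigma.\mathtt{ops}$ on it; and for each $w\in\sigma.\mathtt{ops}$ a modification view $\sigma.{\tt mview}_w$ mapping variables of both components to timestamped operations. For $(a,q)$: ${\tt tst}(a,q)=q$, $var(a)$ is its variable/object, $wrval(a)$ the value written. $\sigma.\mathtt{Obs}(t,x)=\{(a,q)\in\sigma.\mathtt{ops}\mid var(a)=x\wedge {\tt tst}(\sigma.{\tt tview}_t(x))\le q\}$. $maxTS(o,\sigma)$ is the largest timestamp of an operation on $o$ in $\sigma.\mathtt{ops}$. For views, $(V_1\otimes V_2)(x)$ is $V_1(x)$ if ${\tt tst}(V_2(x))\le{\tt tst}(V_1(x))$ and $V_2(x)$ otherwise ($x\in dom(V_1)$). Client writes (relaxed client accesses) follow: a write $a=wr^{[R]}(x,n)$ by $t$ picks $(w,q)\in\gamma.\mathtt{Obs}(t,x)\setminus\gamma.\mathtt{cvd}$ and a fresh $q'$ ($q<q'$ and $q'<{\tt tst}(w')$ for every $w'\in\gamma.\mathtt{ops}$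 with $q<{\tt tst}(w')$), adds $(a,q')$ to $\mathtt{ops}$, sets ${\tt tview}_t:={\tt tview}_t[x:=(a,q')]$ and ${\tt mview}_{(a,q')}:=$ new ${\tt tview}_t\cup\beta.{\tt tview}_t$. Abstract lock $l$: initially the library state has $\mathtt{ops}=\{(l.init_0,0)\}$, ${\tt tview}_t(l)=(l.init_0,0)$ for all $t$, $\mathtt{cvd}=\emptyset$. Step ${\tt l.Acquire}(n)_t$ (returns true): requires $(w,q)\in\beta.\mathtt{ops}$ with $w\in\{l.init_0,l.release_{n-1}\}$, $q=maxTS(l,\beta)$; chooses $q'>q$; with $b=l.acquire_n(t)$ it sets $\beta.\mathtt{ops}:=\beta.\mathtt{ops}\cup\{(b,q')\}$, $\beta.\mathtt{cvd}:=\beta.\mathtt{cvd}\cup\{(w,q)\}$, $\beta.{\tt tview}_t:=\beta.{\tt tview}_t[l:=(b,q')]\otimes\beta.{\tt mview}_{(w,q)}$, $\gamma.{\tt tview}_t:=\gamma.{\tt tview}_t\otimes\beta.{\tt mview}_{(w,q)}$, and $\beta.{\tt mview}_{(b,q')}:=$ new $\beta.{\tt tview}_t\,\cup$ new $\gamma.{\tt tview}_t$. Step ${\tt l.Release}(n)_t$: requires $(l.acquire_{n-1}(t),q)\in\beta.\mathtt{ops}$ with $q=maxTS(l,\beta)$; chooses $q'>q$, adds $(l.release_n,q')$ to $\beta.\mathtt{ops}$, sets $\beta.{\tt tview}_t:=\beta.{\tt tview}_t[l:=(l.release_n,q')]$ and $\beta.{\tt mview}_{(l.release_n,q')}:=$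 new $\beta.{\tt tview}_t\cup\gamma.{\tt tview}_t$; the client state is unchanged. Lock operations are synchronising. Assertions (client assertions evaluated on $\gamma$, lock assertions on $\beta$): $last(W,x)$ is the element of $W$ on $x$ with largest timestamp; $dview(V,W,x)=n$ iff $V(x)=last(W,x)$ and $wrval(last(W,x))=n$. $[x=n]_t$ iff $dview(\gamma.{\tt tview}_t,\gamma.\mathtt{ops}\cap\text{writes},x)=n$. $\langle o.m\rangle_t$ iff $\exists q.(o.m,q)\in\beta.\mathtt{ops}\wedge q\ge{\tt tst}(\beta.{\tt tview}_t(o))$. $[o.m]_t$ iff ${\tt tst}(\beta.{\tt tview}_t(o))=maxTS(o,\beta)$ and $(o.m,maxTS(o,\beta))\in\beta.\mathtt{ops}$. $\langle o.m\rangle[y=v]_t$ iff $o.m$ is synchronising and for all $q$ with $(o.m,q)\in\beta.\mathtt{ops}$ and $q\ge{\tt tst}(\beta.{\tt tview}_t(o))$, $dview(\beta.{\tt mview}_{(o.m,q)},\gamma.\mathtt{ops},y)=v$. Hidden value $\mathbf{H}_{o.m}$ iff some $(o.m,q)\in\beta.\mathtt{ops}$ exists and every such $(o.m,q)$ is in $\beta.\mathtt{cvd}$. *)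

(* RC11 RAR with views, client + abstract-lock library. *)
From HB Require Import structures.
From mathcomp Require Import all_boot all_order all_algebra.
Set Implicit Arguments. Unset Strict Implicit. Unset Printing Implicit Defensive.
Import Order.TTheory GRing.Theory Num.Theory.
Local Open Scope ring_scope.

Definition thread := nat.
Definition value := nat.

(* Locations: client (global) variables and library objects (locks). *)
Inductive loc := CV of nat | LO of nat.

Definition loc_eq_dec : comparable loc.
Proof. move=> a b; rewrite /decidable; decide equality; apply: (@eq_comparable nat). Defined.
HB.instance Definition _ := hasDecEq.Build loc (compareP loc_eq_dec).

(* Actions: client writes wr(x,n), releasing writes wr^R(x,n), updates
   upd^RA(x,m,n); abstract lock operations o.acquire_n(t), o.release_n. *)
Inductive act :=
| Wr of nat & value
| WrR of nat & value
| Upd of nat & value & value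
| LAcquire of nat & nat & thread
| LRelease of nat & nat.

Definition act_eq_dec : comparable act.
Proof. move=> a b; rewrite /decidable; decide equality; apply: (@eq_comparable nat). Defined.
HB.instance Definition _ := hasDecEq.Build act (compareP act_eq_dec).

(* o.init_0 = o.release_0 *)
Definition LInit (o : nat) : act := LRelease o 0.

Definition var (a : act) : loc :=
  match a with
  | Wr x _ | WrR x _ | Upd x _ _ => CV x
  | LAcquire o _ _ | LRelease o _ => LO o
  end.

Definition wrval (a : act) : option value :=
  match a with
  | Wr _ n | WrR _ n | Upd _ _ n => Some n
  | _ => None
  end.

Definition is_write (a : act) : bool :=
  match a with Wr _ _ | WrR _ _ | Upd _ _ _ => true | _ => false end.

Definition is_releasing (a : act) : bool :=
  match a with WrR _ _ | Upd _ _ _ => true | _ => false end.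

Definition is_sync (a : act) : bool :=
  match a with
  | Wr _ _ => false
  | _ => true
  end.

Definition tsop := (act * rat)%type.
Definition tst (e : tsop) : rat := e.2.

Definition view := loc -> tsop.

(* component state (client state gamma or library state beta) *)
Record cstate := mkS {
  ops : tsop -> Prop;
  cvd : tsop -> Prop;
  tview : thread -> view;
  mview : tsop -> view }.

Definition Obs (s : cstate) (t : thread) (x : loc) (e : tsop) : Prop :=
  ops s e /\ var e.1 = x /\ tst (tview s t x) <= tst e.

Definition vupd (V : view) (x : loc) (e : tsop) : view :=
  fun y => if y == x then e else V y.
Definition vmerge (V1 V2 : view) : view :=
  fun y => if tst (V2 y) <= tst (V1 y) then V1 y else V2 y.
Definition vunion (Vc Vl : view) : view :=
  fun y => match y with CV _ => Vc y | LO _ => Vl y end.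
Definition tvupd (tv : thread -> view) (t : thread) (V : view) : thread -> view :=
  fun t0 => if t0 == t then V else tv t0.
Definition mvupd (mv : tsop -> view) (e : tsop) (V : view) : tsop -> view :=
  fun e0 => if e0 == e then V else mv e0.
Definition addop (S : tsop -> Prop) (e : tsop) : tsop -> Prop :=
  fun e0 => S e0 \/ e0 = e.

Definition fresh (s : cstate) (q q' : rat) : Prop :=
  q < q' /\ forall e, ops s e -> q < tst e -> q' < tst e.

Definition is_maxTS (s : cstate) (o : loc) (q : rat) : Prop :=
  (exists a, var a = o /\ ops s (a, q)) /\
  forall a q0, ops s (a, q0) -> var a = o -> q0 <= q.

(* A step relates (gamma, beta) to (gamma', beta'). *)
Definition stepRel := cstate -> cstate -> cstate -> cstate -> Prop.

Definition write_step (rel : bool) (t : thread) (x : nat) (n : value) : stepRel :=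
  fun g b g' b' =>
  exists w q q', Obs g t (CV x) (w, q) /\ ~ cvd g (w, q) /\ fresh g q q' /\
    let a := if rel then WrR x n else Wr x n in
    let tv := vupd (tview g t) (CV x) (a, q') in
    g' = mkS (addop (ops g) (a, q')) (cvd g) (tvupd (tview g) t tv)
             (mvupd (mview g) (a, q') (vunion tv (tview b t))) /\
    b' = b.

Definition read_step (acq : bool) (t : thread) (x : nat) (n : value) : stepRel :=
  fun g b g' b' =>
  exists w q, Obs g t (CV x) (w, q) /\ wrval w = Some n /\
    let sync := acq && is_releasing w in
    let tv0 := vupd (tview g t) (CV x) (w, q) in
    let tv := if sync then vmerge tv0 (mview g (w, q)) else tv0 in
    let btv := if sync then vmerge (tview b t) (mview g (w, q)) else tview b t in
    g' = mkS (ops g) (cvd g) (tvupd (tview g) t tv) (mview g) /\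
    b' = mkS (ops b) (cvd b) (tvupd (tview b) t btv) (mview b).

Definition update_step (t : thread) (x : nat) (m n : value) : stepRel :=
  fun g b g' b' =>
  exists w q q', Obs g t (CV x) (w, q) /\ ~ cvd g (w, q) /\ wrval w = Some m /\
    fresh g q q' /\
    let a := Upd x m n in
    let sync := is_releasing w in
    let tv0 := if sync then vmerge (tview g t) (mview g (w, q)) else tview g t in
    let tv := vupd tv0 (CV x) (a, q') in
    let btv := if sync then vmerge (tview b t) (mview g (w, q)) else tview b t in
    g' = mkS (addop (ops g) (a, q')) (addop (cvd g) (w, q)) (tvupd (tview g) t tv)
             (mvupd (mview g) (a, q') (vunion tv btv)) /\
    b' = mkS (ops b) (cvd b) (tvupd (tview b) t btv) (mview b).

(* l.Acquire(n)_t (returns true) *)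
Definition acquire_step (l : nat) (n : nat) (t : thread) : stepRel :=
  fun g b g' b' =>
  exists w q q', ops b (w, q) /\
    (* w in {l.init_0, l.release_(n-1)}, with l.init_0 = l.release_0 *)
    (exists k, w = LRelease l k /\ n = k.+1) /\
    is_maxTS b (LO l) q /\ q < q' /\
    let bb := LAcquire l n t in
    let btv := vmerge (vupd (tview b t) (LO l) (bb, q')) (mview b (w, q)) in
    let gtv := vmerge (tview g t) (mview b (w, q)) in
    b' = mkS (addop (ops b) (bb, q')) (addop (cvd b) (w, q)) (tvupd (tview b) t btv)
             (mvupd (mview b) (bb, q') (vunion gtv btv)) /\
    g' = mkS (ops g) (cvd g) (tvupd (tview g) t gtv) (mview g).

Definition release_step (l : nat) (n : nat) (t : thread) : stepRel :=
  fun g b g' b' =>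
  exists k q q', ops b (LAcquire l k t, q) /\ n = k.+1 /\
    is_maxTS b (LO l) q /\ q < q' /\
    let r := LRelease l n in
    let btv := vupd (tview b t) (LO l) (r, q') in
    b' = mkS (addop (ops b) (r, q')) (cvd b) (tvupd (tview b) t btv)
             (mvupd (mview b) (r, q') (vunion (tview g t) btv)) /\
    g' = g.

Inductive lmeth := Acquire | Release.

Definition lstep (l : nat) (mm : lmeth) (n : nat) (t : thread) : stepRel :=
  match mm with
  | Acquire => acquire_step l n t
  | Release => release_step l n t
  end.

Definition step (l : nat) : stepRel :=
  fun g b g' b' => exists t : thread,
    (exists rel x n, write_step rel t x n g b g' b') \/
    (exists acq x n, read_step acq t x n g b g' b') \/
    (exists x m n, update_step t x m n g b g' b') \/
    (exists n, lstep l Acquire n t g b g' b') \/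
    (exists n, lstep l Release n t g b g' b').

Definition init_state (l : nat) (g b : cstate) : Prop :=
  exists iv : nat -> value,
    (forall e, ops g e <-> exists x, e = (Wr x (iv x), 0)) /\
    (forall e, ~ cvd g e) /\
    (forall t x, tview g t (CV x) = (Wr x (iv x), 0)) /\
    (forall x y, mview g (Wr x (iv x), 0) (CV y) = (Wr y (iv y), 0)) /\
    (forall x, mview g (Wr x (iv x), 0) (LO l) = (LInit l, 0)) /\
    (forall e, ops b e <-> e = (LInit l, 0)) /\
    (forall e, ~ cvd b e) /\
    (forall t, tview b t (LO l) = (LInit l, 0)) /\
    (forall y, mview b (LInit l, 0) (CV y) = (Wr y (iv y), 0)) /\
    mview b (LInit l, 0) (LO l) = (LInit l, 0).

Inductive reachable (l : nat) : cstate -> cstate -> Prop :=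
| reach_init g b : init_state l g b -> reachable l g b
| reach_step g b g' b' : reachable l g b -> step l g b g' b' -> reachable l g' b'.

Definition dview (V : view) (W : tsop -> Prop) (x : loc) (n : value) : Prop :=
  exists w, W w /\ var w.1 = x /\
    (forall w', W w' -> var w'.1 = x -> tst w' <= tst w) /\
    V x = w /\ wrval w.1 = Some n.

(* [x = n]_t  (on the client state) *)
Definition cval (g : cstate) (t : thread) (x : nat) (n : value) : Prop :=
  dview (tview g t) (fun e => ops g e /\ is_write e.1) (CV x) n.

(* <o.m>_t  (o = var a) *)
Definition pobs (b : cstate) (t : thread) (a : act) : Prop :=
  exists q, ops b (a, q) /\ tst (tview b t (var a)) <= q.

(* [o.m]_t *)
Definition dobs (b : cstate) (t : thread) (a : act) : Prop :=
  exists q, is_maxTS b (var a) q /\ tst (tview b t (var a)) = q /\ ops b (a, q).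

(* <o.m>[y = v]_t *)
Definition cobs (g b : cstate) (t : thread) (a : act) (y : nat) (v : value) : Prop :=
  is_sync a /\
  forall q, ops b (a, q) -> tst (tview b t (var a)) <= q ->
    dview (mview b (a, q)) (ops g) (CV y) v.

Definition hidden (b : cstate) (a : act) : Prop :=
  (exists q, ops b (a, q)) /\ forall q, ops b (a, q) -> cvd b (a, q).

Definition hoare (l : nat) (P : cstate -> cstate -> Prop) (S : stepRel)
    (Q : cstate -> cstate -> Prop) : Prop :=
  forall g b g' b', reachable l g b -> P g b -> S g b g' b' -> Q g' b'.

(* All six triples follow from a single state invariant [Inv] that holds in
   every reachable state.  Its central component is that the library
   operations on the lock are totally ordered by their version index
   ([lock_index]), and that this order agrees with the timestamp order.
   Consequently the operation at the maximal timestamp is the one of maximal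
   index, every covered operation has a successor and so lies strictly below
   the maximum, and a thread's view of the lock never exceeds the maximum.
   The remaining components say that all views point to existing operations
   on the right location, and that client operations are writes with unique
   timestamps per variable; these give the value-transfer triples (5), (6). *)
From mathcomp Require Import all_boot all_order all_algebra.
Set Implicit Arguments. Unset Strict Implicit. Unset Printing Implicit Defensive.
Import Order.TTheory GRing.Theory Num.Theory.
Local Open Scope ring_scope.

Lemma vmerge_cases (V1 V2 : view) y : vmerge V1 V2 y = V1 y \/ vmerge V1 V2 y = V2 y.
Proof. by rewrite /vmerge; case: ifP; auto. Qed.

Lemma tvupd_eq (tv : thread -> view) t V : tvupd tv t V t = V.
Proof. by rewrite /tvupd eqxx. Qed.

Lemma tvupd_neq (tv : thread -> view) t t0 V : t0 <> t -> tvupd tv t V t0 = tv t0.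
Proof. by rewrite /tvupd; case: eqP. Qed.

Definition on_var (S : tsop -> Prop) (y : loc) (e : tsop) : Prop :=
  S e /\ var e.1 = y.

Definition ts_unique (S : tsop -> Prop) : Prop :=
  forall e e', S e -> S e' -> var e.1 = var e'.1 -> tst e = tst e' -> e = e'.

(* Merging a view with one pointing at the last operation [w] on [y] yields
   [w]: the other candidate can only win by having a timestamp as large as
   [w]'s, hence equal, hence it is [w] itself. *)
Lemma vmerge_last (W : tsop -> Prop) (V1 V2 : view) y w :
  ts_unique W -> on_var W y (V1 y) -> on_var W y w ->
  (forall w', W w' -> var w'.1 = y -> tst w' <= tst w) ->
  V2 y = w -> vmerge V1 V2 y = w.
Proof.
move=> Huniq [HV1 HvV1] [Hw Hvw] Hmax HV2; rewrite /vmerge HV2; case: ifP => // Hle.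
apply: Huniq => //; first by rewrite HvV1 Hvw.
by apply: le_anti; rewrite Hle Hmax.
Qed.

Lemma maxTS_le b o q a q0 : is_maxTS b o q -> ops b (a, q0) -> var a = o -> q0 <= q.
Proof. by move=> [_ Hmax]; apply: Hmax. Qed.

Lemma maxTS_uniq b o q1 q2 : is_maxTS b o q1 -> is_maxTS b o q2 -> q1 = q2.
Proof.
move=> [[a1 [Hv1 Ho1]] H1] [[a2 [Hv2 Ho2]] H2].
by apply: le_anti; rewrite (H2 _ _ Ho1 Hv1) (H1 _ _ Ho2 Hv2).
Qed.

Lemma maxTS_addop b o q q' a C T M :
  is_maxTS b o q -> q < q' -> var a = o ->
  is_maxTS (mkS (addop (ops b) (a, q')) C T M) o q'.
Proof.
move=> Hmax Hlt Hva; split; first by exists a; split => //; right.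
move=> a0 q0 [Ho|[_ ->]] Hv //.
exact: le_trans (maxTS_le Hmax Ho Hv) (ltW Hlt).
Qed.

Lemma fresh_ne g q q' e : fresh g q q' -> ops g e -> tst e <> q'.
Proof.
move=> [Hqq' Hf] He Heq; have := Hf e He; rewrite Heq Hqq' => /(_ isT).
by rewrite ltxx.
Qed.

Lemma ts_unique_fresh g q q' a :
  ts_unique (ops g) -> fresh g q q' -> ts_unique (addop (ops g) (a, q')).
Proof.
move=> Huniq Hfr e e' [He|->] [He'|->] //.
- exact: Huniq.
- by move=> _ Ht; case: (fresh_ne Hfr He Ht).
- by move=> _ Ht; case: (fresh_ne Hfr He' (esym Ht)).
Qed.

(* The version index of a lock operation ([init_0] is [release_0]). *)
Definition lock_index (a : act) : nat :=
  match a with LAcquire _ n _ => n | LRelease _ n => n | _ => 0%N end.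

Definition index_monotone (S : tsop -> Prop) : Prop :=
  forall a q a' q', S (a, q) -> S (a', q') ->
    (lock_index a < lock_index a')%N -> q < q'.

Record Inv (l : nat) (g b : cstate) : Prop := {
  lib_on_lock : forall e, ops b e -> var e.1 = LO l;
  lib_index_mono : index_monotone (ops b);
  lib_covered_succ : forall a q, cvd b (a, q) ->
    exists a' q', ops b (a', q') /\ lock_index a' = (lock_index a).+1;
  lib_mview_lock_le : forall e, ops b e -> tst (mview b e (LO l)) <= tst e;
  lib_tview_ops : forall t, ops b (tview b t (LO l));
  cli_mview_lock_ops : forall e, ops g e -> ops b (mview g e (LO l));
  cli_tview_ok : forall t y, on_var (ops g) (CV y) (tview g t (CV y));
  cli_ts_unique : ts_unique (ops g);
  cli_writes : forall e, ops g e -> is_write e.1;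
  cli_mview_ok : forall e y, ops g e -> on_var (ops g) (CV y) (mview g e (CV y));
  lib_mview_cli_ok : forall e y, ops b e -> on_var (ops g) (CV y) (mview b e (CV y)) }.

Lemma inv_init l g b : init_state l g b -> Inv l g b.
Proof.
move=> [iv [Hog [Hcg [Htg [Hmgc [Hmgl [Hob [Hcb [Htb [Hmbc Hmbl]]]]]]]]]].
constructor.
- by move=> e /Hob ->.
- by move=> a q a' q' /Hob [-> _] /Hob [-> _]; rewrite ltnn.
- by move=> a q /Hcb.
- by move=> e /Hob ->; rewrite Hmbl.
- by move=> t0; rewrite Htb; apply/Hob.
- by move=> e /Hog [y ->]; rewrite Hmgl; apply/Hob.
- by move=> t0 y; rewrite Htg; split => //; apply/Hog; exists y.
- by move=> e e' /Hog [y ->] /Hog [y' ->] /= [->].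
- by move=> e /Hog [y ->].
- by move=> e y /Hog [z ->]; rewrite Hmgc; split => //; apply/Hog; exists y.
- by move=> e y /Hob ->; rewrite Hmbc; split => //; apply/Hog; exists y.
Qed.

(* Client steps touch the library only through thread views of the lock,
   which are moved to library operations recorded in client views. *)

Lemma inv_write l g b g' b' rel t x n :
  Inv l g b -> write_step rel t x n g b g' b' -> Inv l g' b'.
Proof.
move=> I [w [q [q' [_ [_ [Hfr [-> ->]]]]]]].
set a := (if rel then WrR x n else Wr x n).
have Hva : var a = CV x by rewrite /a; case: (rel).
set tv := vupd (tview g t) (CV x) (a, q').
have Htv y : on_var (addop (ops g) (a, q')) (CV y) (tv (CV y)).
  rewrite /tv /vupd; case: eqP => [-> | _]; first by split; [right|].
  by have [? ?] := cli_tview_ok I t y; split => //; left.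
case: I => I0 I1 I2 I3 I4 I5 I6 I7 I8 I9 I10.
constructor => //=.
- move=> e He; rewrite /mvupd; case: eqP => Hk /=; first exact: I4.
  by case: He => [He|Hek]; [apply: I5|].
- move=> t0 y; case: (eqVneq t0 t) => [->|/eqP Hne]; first by rewrite tvupd_eq.
  by rewrite tvupd_neq //; have [? ?] := I6 t0 y; split => //; left.
- exact: ts_unique_fresh I7 Hfr.
- by move=> e [He|->]; [apply: I8|rewrite /a; case: (rel)].
- move=> e y He; rewrite /mvupd; case: eqP => Hk /=; first exact: Htv.
  case: He => [He|Hek] //.
  by have [? ?] := I9 e y He; split => //; left.
- by move=> e y He; have [? ?] := I10 e y He; split => //; left.
Qed.

Lemma inv_read l g b g' b' acq t x n :
  Inv l g b -> read_step acq t x n g b g' b' -> Inv l g' b'.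
Proof.
move=> I [w [q [[Hwq [Hvw _]] [_ [-> ->]]]]].
case: I => I0 I1 I2 I3 I4 I5 I6 I7 I8 I9 I10.
constructor => //=.
- move=> t0; case: (eqVneq t0 t) => [->|/eqP Hne]; last by rewrite tvupd_neq.
  rewrite tvupd_eq; case: ifP => _ //.
  by case: (vmerge_cases (tview b t) (mview g (w, q)) (LO l)) => ->; [apply: I4|apply: I5].
- move=> t0 y; case: (eqVneq t0 t) => [->|/eqP Hne]; last by rewrite tvupd_neq.
  rewrite tvupd_eq.
  have Hread : on_var (ops g) (CV y) (vupd (tview g t) (CV x) (w, q) (CV y)).
    by rewrite /vupd; case: eqP => [->|_].
  case: ifP => _ //.
  by case: (vmerge_cases (vupd (tview g t) (CV x) (w, q)) (mview g (w, q)) (CV y)) => ->;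
    [|apply: I9].
Qed.

Lemma inv_update l g b g' b' t x m n :
  Inv l g b -> update_step t x m n g b g' b' -> Inv l g' b'.
Proof.
move=> I [w [q [q' [[Hwq _] [_ [_ [Hfr [-> ->]]]]]]]].
case: I => I0 I1 I2 I3 I4 I5 I6 I7 I8 I9 I10.
set a := Upd x m n.
set tv0 := (if is_releasing w then vmerge (tview g t) (mview g (w, q)) else tview g t).
set btv := (if is_releasing w then vmerge (tview b t) (mview g (w, q)) else tview b t).
have Hbtv : ops b (btv (LO l)).
  rewrite /btv; case: ifP => _ //.
  by case: (vmerge_cases (tview b t) (mview g (w, q)) (LO l)) => ->; [apply: I4|apply: I5].
have Htv y : on_var (addop (ops g) (a, q')) (CV y) (vupd tv0 (CV x) (a, q') (CV y)).
  rewrite /vupd; case: eqP => [-> | _]; first by split; [right|].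
  suff [? ?] : on_var (ops g) (CV y) (tv0 (CV y)) by split => //; left.
  rewrite /tv0; case: ifP => _; last exact: I6.
  by case: (vmerge_cases (tview g t) (mview g (w, q)) (CV y)) => ->; [apply: I6|apply: I9].
constructor => //=.
- move=> t0; case: (eqVneq t0 t) => [->|/eqP Hne]; last by rewrite tvupd_neq.
  by rewrite tvupd_eq.
- move=> e He; rewrite /mvupd; case: eqP => Hk /=; first exact: Hbtv.
  by case: He => [He|Hek]; [apply: I5|].
- move=> t0 y; case: (eqVneq t0 t) => [->|/eqP Hne]; first by rewrite tvupd_eq.
  by rewrite tvupd_neq //; have [? ?] := I6 t0 y; split => //; left.
- exact: ts_unique_fresh I7 Hfr.
- by move=> e [He|->]; [apply: I8|].
- move=> e y He; rewrite /mvupd; case: eqP => Hk /=; first exact: Htv.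
  case: He => [He|Hek] //.
  by have [? ?] := I9 e y He; split => //; left.
- by move=> e y He; have [? ?] := I10 e y He; split => //; left.
Qed.

Lemma index_le_max l g b w q a q0 : Inv l g b -> ops b (w, q) ->
  is_maxTS b (LO l) q -> ops b (a, q0) -> (lock_index a <= lock_index w)%N.
Proof.
move=> I Hw Hmax Ha; rewrite leqNgt; apply/negP => Hlt.
have := lt_le_trans (lib_index_mono I Hw Ha Hlt) (maxTS_le Hmax Ha (lib_on_lock I Ha)).
by rewrite ltxx.
Qed.

Lemma index_monotone_extend l g b w q a q' : Inv l g b -> ops b (w, q) ->
  is_maxTS b (LO l) q -> q < q' -> lock_index a = (lock_index w).+1 ->
  index_monotone (addop (ops b) (a, q')).
Proof.
move=> I Hw Hmax Hlt Ha; have Hwa : (lock_index w < lock_index a)%N by rewrite Ha.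
move=> a1 q1 a2 q2 [H1|[-> ->]] [H2|[-> ->]] Hl.
- exact: (lib_index_mono I H1 H2 Hl).
- exact: le_lt_trans (maxTS_le Hmax H1 (lib_on_lock I H1)) Hlt.
- by move: (index_le_max I Hw Hmax H2); rewrite leqNgt (ltn_trans Hwa Hl).
- by rewrite ltnn in Hl.
Qed.

(* After an acquire, the acquiring thread's view of the lock is the new
   acquire operation: the view merged in is no later than the old maximum. *)
Lemma acquire_tview_lock l (b : cstate) (V : view) w q bb q' :
  tst (mview b (w, q) (LO l)) <= q -> q < q' ->
  vmerge (vupd V (LO l) (bb, q')) (mview b (w, q)) (LO l) = (bb, q').
Proof.
move=> Hle Hlt; rewrite /vmerge /vupd eqxx ifT //=.
exact: le_trans Hle (ltW Hlt).
Qed.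

Lemma inv_acquire l g b g' b' n t :
  Inv l g b -> acquire_step l n t g b g' b' -> Inv l g' b'.
Proof.
move=> I [w [q [q' [Hwq [[k [Ew ->]] [Hmax [Hlt [-> ->]]]]]]]]; subst w.
have Hmono := index_monotone_extend (a := LAcquire l k.+1 t) I Hwq Hmax Hlt erefl.
case: I => I0 I1 I2 I3 I4 I5 I6 I7 I8 I9 I10.
set bb := LAcquire l k.+1 t.
set btv := vmerge (vupd (tview b t) (LO l) (bb, q')) (mview b (LRelease l k, q)).
set gtv := vmerge (tview g t) (mview b (LRelease l k, q)).
have HbtvL : btv (LO l) = (bb, q') by apply: acquire_tview_lock => //; apply: I3.
have Hgtv y : on_var (ops g) (CV y) (gtv (CV y)).
  by rewrite /gtv; case: (vmerge_cases (tview g t) (mview b (LRelease l k, q)) (CV y)) => ->;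
    [apply: I6|apply: I10].
constructor => //=.
- by move=> e [He|->]; [apply: I0|].
- move=> a0 q0 [Hc|[-> _]]; last by exists bb, q'; split => //; right.
  by have [a' [q'' [? ?]]] := I2 _ _ Hc; exists a', q''; split => //; left.
- move=> e He; rewrite /mvupd; case: eqP => Hk /=; first by rewrite Hk HbtvL.
  by case: He => [He|Hek] //; apply: I3.
- move=> t0; case: (eqVneq t0 t) => [->|/eqP Hne]; first by rewrite tvupd_eq HbtvL; right.
  by rewrite tvupd_neq //; left.
- by move=> e He; left; apply: I5.
- move=> t0 y; case: (eqVneq t0 t) => [->|/eqP Hne]; first by rewrite tvupd_eq.
  by rewrite tvupd_neq.
- move=> e y He; rewrite /mvupd; case: eqP => Hk /=; first exact: Hgtv.
  by case: He => [He|Hek] //; apply: I10.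
Qed.

Lemma inv_release l g b g' b' n t :
  Inv l g b -> release_step l n t g b g' b' -> Inv l g' b'.
Proof.
move=> I [k [q [q' [Hwq [-> [Hmax [Hlt [-> ->]]]]]]]].
have Hmono := index_monotone_extend (a := LRelease l k.+1) I Hwq Hmax Hlt erefl.
case: I => I0 I1 I2 I3 I4 I5 I6 I7 I8 I9 I10.
set r := LRelease l k.+1.
have HbtvL : vupd (tview b t) (LO l) (r, q') (LO l) = (r, q') by rewrite /vupd eqxx.
constructor => //=.
- by move=> e [He|->]; [apply: I0|].
- by move=> a0 q0 Hc; have [a' [q'' [? ?]]] := I2 _ _ Hc; exists a', q''; split => //; left.
- move=> e He; rewrite /mvupd; case: eqP => Hk /=; first by rewrite Hk HbtvL.
  by case: He => [He|Hek] //; apply: I3.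
- move=> t0; case: (eqVneq t0 t) => [->|/eqP Hne]; first by rewrite tvupd_eq HbtvL; right.
  by rewrite tvupd_neq //; left.
- by move=> e He; left; apply: I5.
- move=> e y He; rewrite /mvupd; case: eqP => Hk /=; first exact: I6.
  by case: He => [He|Hek] //; apply: I10.
Qed.

Lemma inv_reach l g b : reachable l g b -> Inv l g b.
Proof.
elim => [g0 b0 /inv_init //|g0 b0 g1 b1 _ I [t0 Hstep]].
case: Hstep => [[rel [y [m Hs]]]|[[acq [y [m Hs]]]|[[y [m1 [m2 Hs]]]|[[m Hs]|[m Hs]]]]].
- exact: inv_write I Hs.
- exact: inv_read I Hs.
- exact: inv_update I Hs.
- exact: inv_acquire I Hs.
- exact: inv_release I Hs.
Qed.

Lemma index_same_ts l g b a a' q : Inv l g b ->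
  ops b (a, q) -> ops b (a', q) -> lock_index a = lock_index a'.
Proof.
move=> I Ha Ha'; case: (ltngtP (lock_index a) (lock_index a')) => // Hlt.
- by have := lib_index_mono I Ha Ha' Hlt; rewrite ltxx.
- by have := lib_index_mono I Ha' Ha Hlt; rewrite ltxx.
Qed.

(* A covered operation has a successor, so its index is below the maximum. *)
Lemma covered_index_lt_max l g b a qa w q : Inv l g b -> cvd b (a, qa) ->
  ops b (w, q) -> is_maxTS b (LO l) q -> (lock_index a < lock_index w)%N.
Proof.
move=> I Hc Hw Hmax; have [a' [q' [Ha' Hidx]]] := lib_covered_succ I Hc.
by rewrite -ltnS -Hidx ltnS (index_le_max I Hw Hmax Ha').
Qed.

Lemma tview_le_max l g b t q : Inv l g b ->
  is_maxTS b (LO l) q -> tst (tview b t (LO l)) <= q.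
Proof.
move=> I Hmax; have Ho := lib_tview_ops I t; have Hv := lib_on_lock I Ho.
by move: Ho Hv; case: (tview b t (LO l)) => a0 q0; apply: maxTS_le Hmax.
Qed.

Lemma hidden_release_acquire_index l t u v :
  hoare l (fun _ b => hidden b (LRelease l u))
          (acquire_step l v t)
          (fun _ _ => (u.+1 < v)%N).
Proof.
move=> g b g' b' /inv_reach I [[qu Hqu] Hcv].
move=> [w [q [q' [Hwq [[k [Ew ->]] [Hmax _]]]]]]; subst w.
by rewrite ltnS; apply: (covered_index_lt_max I (Hcv _ Hqu) Hwq Hmax).
Qed.

(* (2) A hidden release stays hidden: lock steps only cover the maximum and
   never re-add [release_u], whose index is below the maximum. *)
Lemma hidden_release_stable l t u v mm :
  hoare l (fun _ b => hidden b (LRelease l u))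
          (lstep l mm v t)
          (fun _ b => hidden b (LRelease l u)).
Proof.
move=> g b g' b' /inv_reach I [[qu Hqu] Hcv]; case: mm => /=.
- move=> [w [q [q' [_ [_ [_ [_ [-> _]]]]]]]].
  split; first by exists qu; left.
  by move=> q0 [H|[]] //; left; apply: Hcv.
- move=> [k [q [q' [Hwq [-> [Hmax [_ [-> _]]]]]]]].
  split; first by exists qu; left.
  move=> q0 [H|[Hu _]]; first exact: Hcv.
  have := covered_index_lt_max I (Hcv _ Hqu) Hwq Hmax.
  by rewrite Hu /= ltnNge leqnSn.
Qed.

Lemma dobs_release_acquire l t u v :
  hoare l (fun _ b => dobs b t (LRelease l u))
          (acquire_step l v t)
          (fun _ b => dobs b t (LAcquire l u.+1 t)).
Proof.
move=> g b g' b' /inv_reach I [q0 [Hmax0 [_ Hops0]]].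
move=> [w [q [q' [Hwq [[k [Ew ->]] [Hmax [Hlt [-> _]]]]]]]]; subst w.
have Eq : q0 = q := maxTS_uniq Hmax0 Hmax; subst q0.
have /= Euk := index_same_ts I Hops0 Hwq; subst k.
exists q'; split; last split.
- exact: maxTS_addop Hmax Hlt _.
- by rewrite /= tvupd_eq acquire_tview_lock //; apply: (lib_mview_lock_le I Hwq).
- by right.
Qed.

Lemma cval_other_lock_step l t t' x u v mm : t <> t' ->
  hoare l (fun g _ => cval g t x u)
          (lstep l mm v t')
          (fun g _ => cval g t x u).
Proof.
move=> Htt' g b g' b' _ Hc; case: mm => /=.
- by move=> [w [q [q' [_ [_ [_ [_ [_ ->]]]]]]]]; rewrite /cval /= tvupd_neq.
- by move=> [k [q [q' [_ [_ [_ [_ [_ ->]]]]]]]].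
Qed.

(* (5) Acquiring [release_u] imports the client view it published. *)
Lemma cobs_acquire_cval l t x u v n :
  hoare l (fun g b => cobs g b t (LRelease l u) x n)
          (acquire_step l v t)
          (fun g _ => v = u.+1 -> cval g t x n).
Proof.
move=> g b g' b' /inv_reach I [_ Hc].
move=> [w [q [q' [Hwq [[k [Ew ->]] [Hmax [_ [_ ->]]]]]]]] [Eku]; subst w k.
have [w0 [Hw0 [Hv0 [Hmx [Heq Hval]]]]] := Hc q Hwq (tview_le_max t I Hmax).
exists w0; split; first by split => //; apply: (cli_writes I).
split => //; split; first by move=> w' [Hw' _]; apply: Hmx.
split => //; rewrite /= tvupd_eq.
exact: (vmerge_last (cli_ts_unique I) (cli_tview_ok I t x) (conj Hw0 Hv0) Hmx Heq).
Qed.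

(* (6) Releasing publishes the releaser's client view, which any thread that
   does not yet observe [release_u] will see through it. *)
Lemma release_cobs l t t' x u v : t <> t' ->
  hoare l (fun g b => ~ pobs b t' (LRelease l u) /\ cval g t x v)
          (release_step l u t)
          (fun g b => cobs g b t' (LRelease l u) x v).
Proof.
move=> Htt' g b g' b' /inv_reach I [Hnp Hc].
move=> [k [q [q' [_ [_ [_ [_ [-> ->]]]]]]]].
split => // q0 /= [Hold|[Hq]] Hle.
  by case: Hnp; exists q0; split => //; move: Hle; rewrite tvupd_neq //; apply/nesym.
subst q0; rewrite /mvupd eqxx /=.
have [w0 [[Hw0 _] [Hv0 [Hmx [Heq Hval]]]]] := Hc.
exists w0; do 3!(split => //).
by move=> w' Hw' Hv'; apply: Hmx => //; split => //; apply: (cli_writes I).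
Qed.

Theorem mainTheorem1 (l : nat) (t t' : thread) (x : nat) (u v n : value)
    (mm : lmeth) :
  t <> t' ->
  (* (1) *)
  hoare l (fun _ b => hidden b (LRelease l u))
          (acquire_step l v t)
          (fun _ _ => (u.+1 < v)%N) /\
  (* (2) *)
  hoare l (fun _ b => hidden b (LRelease l u))
          (lstep l mm v t)
          (fun _ b => hidden b (LRelease l u)) /\
  (* (3) *)
  hoare l (fun _ b => dobs b t (LRelease l u))
          (acquire_step l v t)
          (fun _ b => dobs b t (LAcquire l u.+1 t)) /\
  (* (4) *)
  hoare l (fun g _ => cval g t x u)
          (lstep l mm v t')
          (fun g _ => cval g t x u) /\
  (* (5) *)
  hoare l (fun g b => cobs g b t (LRelease l u) x n)
          (acquire_step l v t)
          (fun g _ => v = u.+1 -> cval g t x n) /\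
  (* (6) *)
  hoare l (fun g b => ~ pobs b t' (LRelease l u) /\ cval g t x v)
          (release_step l u t)
          (fun g b => cobs g b t' (LRelease l u) x v).
Proof.
move=> Htt'; split; first exact: hidden_release_acquire_index.
split; first exact: hidden_release_stable.
split; first exact: dobs_release_acquire.
split; first exact: cval_other_lock_step.
split; first exact: cobs_acquire_cval.
exact: release_cobs.
Qed.
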